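(* Let $K\ge1$ and let $\omega\in\mathbb{T}$ be irrational with $\beta(\omega)>40K$. Then for every $\theta\in\mathbb{T}$, $H_{K,\theta,\omega}$ has no eigenvalues in $[0,4e^{K\|f\|_\infty}]$.
   Context: $\mathbb{T}=\mathbb{R}/\mathbb{Z}$. $f:\mathbb{T}\to\mathbb{R}$ is a non-constant real-analytic function with zero mean and $\|f\|_{C^1}=1$. $V(\theta)=\exp(Kf(\theta+\omega))+\exp(-Kf(\theta))$, and $(H_{K,\theta,\omega}u)_n=-u_{n+1}-u_{n-1}+V(\theta+n\omega)u_n$ on $\ell^2(\mathbb{Z})$. For irrational $\omega$ with continued fraction approximants $p_n/q_n$, $\beta(\omega)=\limsup_n\frac{\log q_{n+1}}{q_n}$. *)

From Stdlib Require Import Reals ZArith Lra.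
Open Scope R_scope.

(* f : R -> R is 1-periodic, i.e. a function on T = R/Z *)
Definition periodic1 (f : R -> R) : Prop := forall x, f (x + 1) = f x.

Definition real_analytic (f : R -> R) : Prop :=
  forall x0 : R, exists r : R, 0 < r /\ exists a : nat -> R,
    forall x, Rabs (x - x0) < r -> Pser a (x - x0) (f x).

Definition is_sup_norm (g : R -> R) (s : R) : Prop :=
  is_lub (fun y => exists x, y = Rabs (g x)) s.

Definition irrational (w : R) : Prop :=
  forall (p q : Z), q <> 0%Z -> w <> IZR p / IZR q.

(* Continued fraction expansion of (the class mod 1 of) w:
   x_0 = {w}, x_{n+1} = {1/x_n}, a_{n+1} = floor (1/x_n). *)
Fixpoint cf_rem (w : R) (n : nat) : R :=
  match n with
  | O => frac_part w
  | S m => frac_part (/ cf_rem w m)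
  end.

(* partial quotient a_{n+1} *)
Definition cf_a (w : R) (n : nat) : R := IZR (Int_part (/ cf_rem w n)).

(* (q_n, q_{n+1}) with q_0 = 1, q_1 = a_1, q_{n+2} = a_{n+2} q_{n+1} + q_n *)
Fixpoint cf_qpair (w : R) (n : nat) : R * R :=
  match n with
  | O => (1, cf_a w 0)
  | S m => let (p, c) := cf_qpair w m in (c, cf_a w (S m) * c + p)
  end.

Definition cf_q (w : R) (n : nat) : R := fst (cf_qpair w n).

(* limsup_n u_n > c  (limsup in the extended reals) *)
Definition limsup_gt (u : nat -> R) (c : R) : Prop :=
  exists c', c < c' /\ forall N : nat, exists n : nat, (N <= n)%nat /\ c' < u n.

Definition beta_gt (w : R) (c : R) : Prop :=
  limsup_gt (fun n => ln (cf_q w (S n)) / cf_q w n) c.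

Definition Vpot (f : R -> R) (K w th : R) : R :=
  exp (K * f (th + w)) + exp (- K * f th).

Definition l2Z (u : Z -> R) : Prop :=
  exists M : R, forall N : nat,
    sum_f_R0 (fun k => u (Z.of_nat k) ^ 2 + u (- Z.of_nat (S k))%Z ^ 2) N <= M.

Definition is_eigenvalue (f : R -> R) (K th w E : R) : Prop :=
  exists u : Z -> R, l2Z u /\ (exists n, u n <> 0) /\
    forall n : Z,
      - u (n + 1)%Z - u (n - 1)%Z + Vpot f K w (th + IZR n * w) * u n = E * u n.

(* Gordon's argument.  An eigenvector [u] solves [u(n+1) + u(n-1) = (V(n) - E) u(n)] and decays at
   both ends; it is propagated by transfer matrices of determinant 1 and norm at most [8 e^K].
   Since [beta(w) > 40 K] there are arbitrarily large denominators [q] with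
   [|q w - p| <= e^(-40 K q)], so the potential repeats itself over [q] sites up to [e^(-40 K q)],
   and the transfer matrices over [m-q..m], [m..m+q] and [m+q..m+2q] agree up to an error that is
   negligible against their growth [e^(8 K q)].  By Cayley--Hamilton, one of the three vectors
   reached from [(u(m+1), u(m))] has at least a quarter of its norm, which decay forbids for
   large [q] unless [u(m) = 0]. *)

From Stdlib Require Import Reals Lra Lia ZArith.
Open Scope R_scope.

Record mat2 := Mat2 { m11 : R; m12 : R; m21 : R; m22 : R }.

Definition mat2_id : mat2 := Mat2 1 0 0 1.
Definition mat2_mul (X Y : mat2) : mat2 :=
  Mat2 (m11 X * m11 Y + m12 X * m21 Y) (m11 X * m12 Y + m12 X * m22 Y)
       (m21 X * m11 Y + m22 X * m21 Y) (m21 X * m12 Y + m22 X * m22 Y).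
Definition mat2_sub (X Y : mat2) : mat2 :=
  Mat2 (m11 X - m11 Y) (m12 X - m12 Y) (m21 X - m21 Y) (m22 X - m22 Y).
Definition mat2_adj (X : mat2) : mat2 := Mat2 (m22 X) (- m12 X) (- m21 X) (m11 X).
Definition mat2_det (X : mat2) : R := m11 X * m22 X - m12 X * m21 X.
Definition mat2_tr (X : mat2) : R := m11 X + m22 X.
Definition mat2_app (X : mat2) (v : R * R) : R * R :=
  (m11 X * fst v + m12 X * snd v, m21 X * fst v + m22 X * snd v).

Definition mat2_norm (X : mat2) : R :=
  Rabs (m11 X) + Rabs (m12 X) + Rabs (m21 X) + Rabs (m22 X).
Definition vec_norm (v : R * R) : R := Rmax (Rabs (fst v)) (Rabs (snd v)).

Lemma vec_norm_ge0 v : 0 <= vec_norm v.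
Proof.
  unfold vec_norm; pose proof (Rabs_pos (fst v)); pose proof (Rmax_l (Rabs (fst v)) (Rabs (snd v))).
  lra.
Qed.

Lemma mat2_norm_ge0 X : 0 <= mat2_norm X.
Proof.
  unfold mat2_norm; pose proof (Rabs_pos (m11 X)); pose proof (Rabs_pos (m12 X));
  pose proof (Rabs_pos (m21 X)); pose proof (Rabs_pos (m22 X)); lra.
Qed.

Lemma vec_norm_lub v c : Rabs (fst v) <= c -> Rabs (snd v) <= c -> vec_norm v <= c.
Proof. intros; apply Rmax_lub; assumption. Qed.

Lemma vec_norm_lub_lt v c : Rabs (fst v) < c -> Rabs (snd v) < c -> vec_norm v < c.
Proof. intros; apply Rmax_lub_lt; assumption. Qed.

Lemma Rabs_comb_le a b x y m :
  Rabs x <= m -> Rabs y <= m -> Rabs (a * x + b * y) <= (Rabs a + Rabs b) * m.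
Proof.
  intros Hx Hy. eapply Rle_trans; [apply Rabs_triang|]. rewrite !Rabs_mult.
  pose proof (Rabs_pos a); pose proof (Rabs_pos b).
  assert (Rabs a * Rabs x <= Rabs a * m) by (apply Rmult_le_compat_l; assumption).
  assert (Rabs b * Rabs y <= Rabs b * m) by (apply Rmult_le_compat_l; assumption).
  lra.
Qed.

Lemma vec_norm_app X v : vec_norm (mat2_app X v) <= mat2_norm X * vec_norm v.
Proof.
  assert (H1 : Rabs (fst v) <= vec_norm v) by apply Rmax_l.
  assert (H2 : Rabs (snd v) <= vec_norm v) by apply Rmax_r.
  pose proof (vec_norm_ge0 v).
  pose proof (Rabs_pos (m11 X)); pose proof (Rabs_pos (m12 X));
  pose proof (Rabs_pos (m21 X)); pose proof (Rabs_pos (m22 X)).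
  apply vec_norm_lub; simpl; (eapply Rle_trans; [apply Rabs_comb_le; eassumption|]);
    unfold mat2_norm; nra.
Qed.

Lemma mat2_norm_mul X Y : mat2_norm (mat2_mul X Y) <= mat2_norm X * mat2_norm Y.
Proof.
  assert (Hp : forall a b c d, Rabs (a * b + c * d) <= Rabs a * Rabs b + Rabs c * Rabs d).
  { intros. eapply Rle_trans; [apply Rabs_triang|]. rewrite !Rabs_mult; lra. }
  unfold mat2_norm, mat2_mul; simpl.
  pose proof (Hp (m11 X) (m11 Y) (m12 X) (m21 Y)); pose proof (Hp (m11 X) (m12 Y) (m12 X) (m22 Y)).
  pose proof (Hp (m21 X) (m11 Y) (m22 X) (m21 Y)); pose proof (Hp (m21 X) (m12 Y) (m22 X) (m22 Y)).
  pose proof (Rabs_pos (m11 X)); pose proof (Rabs_pos (m12 X));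
  pose proof (Rabs_pos (m21 X)); pose proof (Rabs_pos (m22 X)).
  pose proof (Rabs_pos (m11 Y)); pose proof (Rabs_pos (m12 Y));
  pose proof (Rabs_pos (m21 Y)); pose proof (Rabs_pos (m22 Y)).
  nra.
Qed.

Lemma mat2_norm_sub_triang X Y Z :
  mat2_norm (mat2_sub X Z) <= mat2_norm (mat2_sub X Y) + mat2_norm (mat2_sub Y Z).
Proof.
  assert (Ht : forall a b c, Rabs (a - c) <= Rabs (a - b) + Rabs (b - c)).
  { intros. replace (a - c) with ((a - b) + (b - c)) by ring. apply Rabs_triang. }
  unfold mat2_norm, mat2_sub; simpl.
  pose proof (Ht (m11 X) (m11 Y) (m11 Z)); pose proof (Ht (m12 X) (m12 Y) (m12 Z)).
  pose proof (Ht (m21 X) (m21 Y) (m21 Z)); pose proof (Ht (m22 X) (m22 Y) (m22 Z)).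
  lra.
Qed.

Lemma mat2_norm_sub_sym X Y : mat2_norm (mat2_sub X Y) = mat2_norm (mat2_sub Y X).
Proof.
  unfold mat2_norm, mat2_sub; simpl.
  rewrite (Rabs_minus_sym (m11 X)), (Rabs_minus_sym (m12 X)),
    (Rabs_minus_sym (m21 X)), (Rabs_minus_sym (m22 X)).
  reflexivity.
Qed.

Lemma mat2_norm_adj X : mat2_norm (mat2_adj X) = mat2_norm X.
Proof. unfold mat2_norm, mat2_adj; simpl; rewrite !Rabs_Ropp; ring. Qed.

Lemma mat2_norm_id : mat2_norm mat2_id = 2.
Proof. unfold mat2_norm, mat2_id; simpl; rewrite Rabs_R1, Rabs_R0; ring. Qed.

Lemma mat2_norm_sub_mul X Y X' Y' :
  mat2_norm (mat2_sub (mat2_mul X Y) (mat2_mul X' Y'))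
  <= mat2_norm X * mat2_norm (mat2_sub Y Y') + mat2_norm (mat2_sub X X') * mat2_norm Y'.
Proof.
  assert (El : mat2_sub (mat2_mul X Y) (mat2_mul X Y') = mat2_mul X (mat2_sub Y Y'))
    by (unfold mat2_sub, mat2_mul; simpl; f_equal; ring).
  assert (Er : mat2_sub (mat2_mul X Y') (mat2_mul X' Y') = mat2_mul (mat2_sub X X') Y')
    by (unfold mat2_sub, mat2_mul; simpl; f_equal; ring).
  eapply Rle_trans; [apply (mat2_norm_sub_triang _ (mat2_mul X Y'))|].
  rewrite El, Er. pose proof (mat2_norm_mul X (mat2_sub Y Y')).
  pose proof (mat2_norm_mul (mat2_sub X X') Y'). lra.
Qed.

Lemma mat2_app_id v : mat2_app mat2_id v = v.
Proof. destruct v; unfold mat2_app, mat2_id; simpl; f_equal; ring. Qed.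

Lemma mat2_app_mul X Y v : mat2_app (mat2_mul X Y) v = mat2_app X (mat2_app Y v).
Proof. destruct v; unfold mat2_app, mat2_mul; simpl; f_equal; ring. Qed.

Lemma mat2_det_mul X Y : mat2_det (mat2_mul X Y) = mat2_det X * mat2_det Y.
Proof. unfold mat2_det, mat2_mul; simpl; ring. Qed.

Lemma mat2_adj_sub X Y : mat2_adj (mat2_sub X Y) = mat2_sub (mat2_adj X) (mat2_adj Y).
Proof. unfold mat2_sub, mat2_adj; simpl; f_equal; ring. Qed.

Lemma mat2_app_adjK X v : mat2_det X = 1 -> mat2_app (mat2_adj X) (mat2_app X v) = v.
Proof.
  destruct v as [x y], X as [a b c d]; unfold mat2_det, mat2_app, mat2_adj; simpl; intros H.
  f_equal; [transitivity ((a * d - b * c) * x) | transitivity ((a * d - b * c) * y)];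
    solve [ring | rewrite H; ring].
Qed.

Lemma vec_norm_app_sub_le X Y v :
  vec_norm (mat2_app X v) <= vec_norm (mat2_app Y v) + mat2_norm (mat2_sub X Y) * vec_norm v.
Proof.
  pose proof (vec_norm_app (mat2_sub X Y) v) as H.
  assert (Hc : forall a b, Rabs a <= Rabs b + Rabs (a - b)).
  { intros a b. replace a with (b + (a - b)) at 1 by ring. apply Rabs_triang. }
  assert (H1 : Rabs (fst (mat2_app (mat2_sub X Y) v)) <= vec_norm (mat2_app (mat2_sub X Y) v))
    by apply Rmax_l.
  assert (H2 : Rabs (snd (mat2_app (mat2_sub X Y) v)) <= vec_norm (mat2_app (mat2_sub X Y) v))
    by apply Rmax_r.
  assert (H3 : Rabs (fst (mat2_app Y v)) <= vec_norm (mat2_app Y v)) by apply Rmax_l.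
  assert (H4 : Rabs (snd (mat2_app Y v)) <= vec_norm (mat2_app Y v)) by apply Rmax_r.
  destruct v as [x y]; unfold mat2_app, mat2_sub in *; simpl in *.
  apply vec_norm_lub; simpl.
  - pose proof (Hc (m11 X * x + m12 X * y) (m11 Y * x + m12 Y * y)).
    replace (m11 X * x + m12 X * y - (m11 Y * x + m12 Y * y))
      with ((m11 X - m11 Y) * x + (m12 X - m12 Y) * y) in * by ring. lra.
  - pose proof (Hc (m21 X * x + m22 X * y) (m21 Y * x + m22 Y * y)).
    replace (m21 X * x + m22 X * y - (m21 Y * x + m22 Y * y))
      with ((m21 X - m21 Y) * x + (m22 X - m22 Y) * y) in * by ring. lra.
Qed.

Lemma vec_norm_comb (v x y : R * R) a b c :
  c * fst v = a * fst x + b * fst y -> c * snd v = a * snd x + b * snd y ->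
  Rabs c * vec_norm v <= Rabs a * vec_norm x + Rabs b * vec_norm y.
Proof.
  intros E1 E2. unfold vec_norm. rewrite <- RmaxRmult by apply Rabs_pos.
  rewrite <- !Rabs_mult, E1, E2.
  pose proof (Rabs_pos a); pose proof (Rabs_pos b).
  pose proof (Rmax_l (Rabs (fst x)) (Rabs (snd x))); pose proof (Rmax_r (Rabs (fst x)) (Rabs (snd x))).
  pose proof (Rmax_l (Rabs (fst y)) (Rabs (snd y))); pose proof (Rmax_r (Rabs (fst y)) (Rabs (snd y))).
  apply Rmax_lub; (eapply Rle_trans; [apply Rabs_triang|]); rewrite !Rabs_mult;
    apply Rplus_le_compat; apply Rmult_le_compat_l; assumption.
Qed.

(* Gordon's lemma: by Cayley--Hamilton, [T^2 v = tr T * T v - v] and [adj T v + T v = tr T * v];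
   use the first when [|tr T| <= 1] and the second otherwise. *)
Lemma gordon_lemma T v : mat2_det T = 1 ->
  vec_norm v <= 2 * Rmax (vec_norm (mat2_app (mat2_adj T) v))
                          (Rmax (vec_norm (mat2_app T v)) (vec_norm (mat2_app T (mat2_app T v)))).
Proof.
  intros Hdet.
  set (M := Rmax _ _).
  assert (H1 : vec_norm (mat2_app (mat2_adj T) v) <= M) by apply Rmax_l.
  assert (H2 : vec_norm (mat2_app T v) <= M) by (eapply Rle_trans; [apply Rmax_l|apply Rmax_r]).
  assert (H3 : vec_norm (mat2_app T (mat2_app T v)) <= M)
    by (eapply Rle_trans; [apply Rmax_r|apply Rmax_r]).
  pose proof (vec_norm_ge0 v); pose proof (vec_norm_ge0 (mat2_app T v)).
  destruct (Rle_dec (Rabs (mat2_tr T)) 1) as [Ht|Ht].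
  - assert (Hc := vec_norm_comb v (mat2_app T v) (mat2_app T (mat2_app T v)) (mat2_tr T) (-1) 1).
    replace (Rabs (-1)) with 1 in Hc by (rewrite Rabs_left; lra).
    rewrite Rabs_R1 in Hc.
    assert (Rabs (mat2_tr T) * vec_norm (mat2_app T v) <= 1 * M)
      by (apply Rmult_le_compat; auto using Rabs_pos).
    destruct v as [x y], T as [a b c d]; unfold mat2_det, mat2_tr, mat2_app in *; simpl in *.
    enough (vec_norm (x, y) <= Rabs (a + d) * vec_norm (a * x + b * y, c * x + d * y) + M) by lra.
    rewrite <- (Rmult_1_l (vec_norm (x, y))).
    eapply Rle_trans; [apply Hc|lra]; simpl;
      [transitivity ((a * d - b * c) * x) | transitivity ((a * d - b * c) * y)];
      solve [rewrite Hdet; ring | ring].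
  - assert (Hc := vec_norm_comb v (mat2_app (mat2_adj T) v) (mat2_app T v) 1 1 (mat2_tr T)).
    rewrite Rabs_R1 in Hc.
    assert (vec_norm v <= Rabs (mat2_tr T) * vec_norm v) by nra.
    enough (Rabs (mat2_tr T) * vec_norm v <= 1 * vec_norm (mat2_app (mat2_adj T) v)
              + 1 * vec_norm (mat2_app T v)) by lra.
    apply Hc; destruct v as [x y], T as [a b c d]; unfold mat2_tr, mat2_app, mat2_adj; simpl; ring.
Qed.

Lemma gordon_lemma_perturbed T T1 T2 v C eps :
  mat2_det T = 1 -> 1 <= C -> mat2_norm T <= C -> 0 <= eps -> eps * C <= / 4 ->
  mat2_norm (mat2_sub T1 T) <= eps -> mat2_norm (mat2_sub T T2) <= eps ->
  vec_norm v <= 4 * Rmax (vec_norm (mat2_app (mat2_adj T2) v))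
                          (Rmax (vec_norm (mat2_app T v)) (vec_norm (mat2_app T1 (mat2_app T v)))).
Proof.
  intros Hdet HC HT Heps HeC H1 H2.
  set (M := Rmax _ _).
  pose proof (gordon_lemma T v Hdet) as HG.
  pose proof (vec_norm_ge0 v); pose proof (mat2_norm_ge0 (mat2_sub T T1)).
  pose proof (mat2_norm_ge0 (mat2_sub (mat2_adj T) (mat2_adj T2))).
  assert (Hadj : vec_norm (mat2_app (mat2_adj T) v)
                 <= vec_norm (mat2_app (mat2_adj T2) v) + eps * vec_norm v).
  { eapply Rle_trans; [apply vec_norm_app_sub_le|].
    rewrite <- mat2_adj_sub, mat2_norm_adj.
    apply Rplus_le_compat_l, Rmult_le_compat_r; assumption. }
  assert (HTT : vec_norm (mat2_app T (mat2_app T v))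
                <= vec_norm (mat2_app T1 (mat2_app T v)) + eps * C * vec_norm v).
  { eapply Rle_trans; [apply vec_norm_app_sub_le|]. apply Rplus_le_compat_l.
    rewrite mat2_norm_sub_sym, Rmult_assoc.
    pose proof (vec_norm_app T v). pose proof (mat2_norm_ge0 T).
    apply Rmult_le_compat; [apply mat2_norm_ge0 | apply vec_norm_ge0 | exact H1 |].
    eapply Rle_trans; [eassumption | apply Rmult_le_compat_r; assumption]. }
  assert (eps * vec_norm v <= vec_norm v / 4) by nra.
  assert (eps * C * vec_norm v <= vec_norm v / 4) by nra.
  assert (vec_norm (mat2_app (mat2_adj T2) v) <= M) by apply Rmax_l.
  assert (vec_norm (mat2_app T v) <= M) by (eapply Rle_trans; [apply Rmax_l|apply Rmax_r]).
  assert (vec_norm (mat2_app T1 (mat2_app T v)) <= M)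
    by (eapply Rle_trans; [apply Rmax_r|apply Rmax_r]).
  enough (Rmax (vec_norm (mat2_app (mat2_adj T) v))
            (Rmax (vec_norm (mat2_app T v)) (vec_norm (mat2_app T (mat2_app T v))))
          <= M + vec_norm v / 4) by lra.
  apply Rmax_lub; [|apply Rmax_lub]; lra.
Qed.

(* [mat2_prod A s n = A (s + n) * ... * A (s + 1)]. *)
Fixpoint mat2_prod (A : Z -> mat2) (s : Z) (n : nat) : mat2 :=
  match n with
  | O => mat2_id
  | S k => mat2_mul (A (s + Z.of_nat (S k))%Z) (mat2_prod A s k)
  end.

Lemma mat2_prod_det A s n : (forall j, mat2_det (A j) = 1) -> mat2_det (mat2_prod A s n) = 1.
Proof.
  intros H; induction n as [|n IH]; simpl.
  - unfold mat2_det, mat2_id; simpl; ring.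
  - rewrite mat2_det_mul, H, IH; ring.
Qed.

Section Products.
Variables (A : Z -> mat2) (B : R).
Hypothesis HB : 1 <= B.
Hypothesis HA : forall j, mat2_norm (A j) <= B.

Lemma mat2_prod_norm s n : mat2_norm (mat2_prod A s n) <= 2 * B ^ n.
Proof.
  induction n as [|n IH]; simpl.
  - rewrite mat2_norm_id; lra.
  - eapply Rle_trans; [apply mat2_norm_mul|].
    pose proof (mat2_norm_ge0 (A (s + Z.pos (Pos.of_succ_nat n))%Z)).
    pose proof (mat2_norm_ge0 (mat2_prod A s n)).
    apply Rle_trans with (B * (2 * B ^ n)); [apply Rmult_le_compat; auto | lra].
Qed.

Lemma mat2_prod_sub_norm s s' n d : 0 <= d ->
  (forall k : nat, mat2_norm (mat2_sub (A (s + Z.of_nat k)%Z) (A (s' + Z.of_nat k)%Z)) <= d) ->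
  mat2_norm (mat2_sub (mat2_prod A s n) (mat2_prod A s' n)) <= 2 * INR n * B ^ n * d.
Proof.
  intros Hd Hk; induction n as [|n IH].
  - unfold mat2_norm, mat2_sub; simpl.
    replace (1 - 1) with 0 by ring; replace (0 - 0) with 0 by ring. rewrite Rabs_R0; lra.
  - simpl mat2_prod. eapply Rle_trans; [apply mat2_norm_sub_mul|].
    set (j := (s + Z.of_nat (S n))%Z).
    pose proof (HA j); pose proof (Hk (S n)).
    pose proof (mat2_prod_norm s' n).
    pose proof (mat2_norm_ge0 (A j)); pose proof (mat2_norm_ge0 (mat2_prod A s' n)).
    pose proof (mat2_norm_ge0 (mat2_sub (mat2_prod A s n) (mat2_prod A s' n))).
    pose proof (mat2_norm_ge0 (mat2_sub (A j) (A (s' + Z.of_nat (S n))%Z))).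
    assert (HBn : 1 <= B ^ n) by (apply pow_R1_Rle; lra).
    pose proof (pos_INR n).
    rewrite S_INR. simpl pow.
    apply Rle_trans with (B * (2 * INR n * B ^ n * d) + d * (2 * B ^ n)).
    + apply Rplus_le_compat; apply Rmult_le_compat; auto.
    + assert (0 <= INR n * B ^ n * d) by (apply Rmult_le_pos; [apply Rmult_le_pos|]; lra).
      assert (0 <= (B - 1) * (B ^ n * d)) by (apply Rmult_le_pos; [|apply Rmult_le_pos]; lra).
      nra.
Qed.

End Products.

Definition transfer (V : Z -> R) (E : R) (j : Z) : mat2 := Mat2 (V j - E) (-1) 1 0.

Lemma transfer_det V E j : mat2_det (transfer V E j) = 1.
Proof. unfold mat2_det, transfer; simpl; ring. Qed.

Lemma transfer_sub_norm V E i j :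
  mat2_norm (mat2_sub (transfer V E i) (transfer V E j)) = Rabs (V i - V j).
Proof.
  unfold mat2_norm, mat2_sub, transfer; simpl.
  replace (V i - E - (V j - E)) with (V i - V j) by ring.
  replace (-1 - -1) with 0 by ring; replace (1 - 1) with 0 by ring; replace (0 - 0) with 0 by ring.
  rewrite Rabs_R0; ring.
Qed.

Lemma transfer_norm V E j : mat2_norm (transfer V E j) = Rabs (V j - E) + 2.
Proof.
  unfold mat2_norm, transfer; simpl. rewrite Rabs_R0, Rabs_R1.
  replace (Rabs (-1)) with 1 by (rewrite Rabs_left; lra). ring.
Qed.

Definition sol_vec (u : Z -> R) (j : Z) : R * R := (u (j + 1)%Z, u j).

Section Solutions.
Variables (V : Z -> R) (E : R) (u : Z -> R).
Hypothesis Hrec : forall j, u (j + 1)%Z = (V j - E) * u j - u (j - 1)%Z.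

Lemma transfer_prod_solution s n :
  mat2_app (mat2_prod (transfer V E) s n) (sol_vec u s) = sol_vec u (s + Z.of_nat n).
Proof.
  induction n as [|n IH].
  - simpl. rewrite mat2_app_id, Z.add_0_r. reflexivity.
  - simpl mat2_prod. rewrite mat2_app_mul, IH. unfold sol_vec, mat2_app, transfer; simpl.
    replace (s + Z.pos (Pos.of_succ_nat n))%Z with (s + Z.of_nat n + 1)%Z by lia.
    rewrite (Hrec (s + Z.of_nat n + 1)%Z).
    replace (s + Z.of_nat n + 1 - 1)%Z with (s + Z.of_nat n)%Z by lia.
    f_equal; ring.
Qed.

Lemma transfer_prod_solution_back s n :
  mat2_app (mat2_adj (mat2_prod (transfer V E) (s - Z.of_nat n) n)) (sol_vec u s)
  = sol_vec u (s - Z.of_nat n).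
Proof.
  rewrite <- (mat2_app_adjK (mat2_prod (transfer V E) (s - Z.of_nat n) n)
                           (sol_vec u (s - Z.of_nat n)))
    by (apply (mat2_prod_det _ _ _ (transfer_det V E))).
  rewrite transfer_prod_solution. do 2 f_equal. lia.
Qed.

Lemma gordon_solution_estimate B q d m :
  (forall j, Rabs (V j - E) + 2 <= B) -> 0 <= d ->
  (forall k, Rabs (V (k + Z.of_nat q)%Z - V k) <= d) -> 16 * INR q * B ^ (2 * q) * d <= 1 ->
  vec_norm (sol_vec u m)
  <= 4 * Rmax (vec_norm (sol_vec u (m - Z.of_nat q)))
              (Rmax (vec_norm (sol_vec u (m + Z.of_nat q)))
                    (vec_norm (sol_vec u (m + Z.of_nat q + Z.of_nat q)))).
Proof.
  intros HV Hd Hper Hsmall.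
  rewrite <- (transfer_prod_solution_back m q), <- (transfer_prod_solution m q),
    <- (transfer_prod_solution (m + Z.of_nat q) q), <- (transfer_prod_solution m q).
  set (A := transfer V E). set (mq := Z.of_nat q). set (eps := 2 * INR q * B ^ q * d).
  assert (HB : 1 <= B) by (pose proof (HV 0%Z); pose proof (Rabs_pos (V 0%Z - E)); lra).
  assert (HA : forall j, mat2_norm (A j) <= B)
    by (intro j; unfold A; rewrite transfer_norm; apply HV).
  assert (HBq : 1 <= B ^ q) by (apply pow_R1_Rle; lra).
  assert (Hdrift : forall s,
            mat2_norm (mat2_sub (mat2_prod A (s + mq) q) (mat2_prod A s q)) <= eps).
  { intro s. apply mat2_prod_sub_norm; auto. intro k. unfold A. rewrite transfer_sub_norm.
    replace (s + mq + Z.of_nat k)%Z with ((s + Z.of_nat k) + mq)%Z by lia. apply Hper. }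
  apply gordon_lemma_perturbed with (C := 2 * B ^ q) (eps := eps).
  - apply (mat2_prod_det _ _ _ (transfer_det V E)).
  - lra.
  - apply mat2_prod_norm; assumption.
  - unfold eps. pose proof (pos_INR q). apply Rmult_le_pos; [|assumption]. nra.
  - unfold eps.
    replace (2 * INR q * B ^ q * d * (2 * B ^ q)) with (/ 4 * (16 * INR q * B ^ (2 * q) * d))
      by (replace (2 * q)%nat with (q + q)%nat by lia; rewrite pow_add; field).
    lra.
  - apply Hdrift.
  - replace m with (m - mq + mq)%Z at 1 by lia. apply Hdrift.
Qed.

End Solutions.

Definition vanishes_at_infinity (u : Z -> R) : Prop :=
  forall eta, 0 < eta -> exists N : nat, forall j, (Z.of_nat N <= Z.abs j)%Z -> Rabs (u j) < eta.

Theorem gordon_criterion (V : Z -> R) (E B : R) (u : Z -> R) :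
  (forall j, Rabs (V j - E) + 2 <= B) ->
  (forall N : nat, exists (q : nat) (d : R), (N <= q)%nat /\ 0 <= d /\
     (forall k, Rabs (V (k + Z.of_nat q)%Z - V k) <= d) /\ 16 * INR q * B ^ (2 * q) * d <= 1) ->
  (forall j, u (j + 1)%Z = (V j - E) * u j - u (j - 1)%Z) ->
  vanishes_at_infinity u ->
  forall m, u m = 0.
Proof.
  intros HV Hrep Hrec Hdecay m.
  destruct (Req_dec (u m) 0) as [|Hm]; [assumption|exfalso].
  assert (Hv : 0 < vec_norm (sol_vec u m)).
  { pose proof (Rmax_r (Rabs (u (m + 1)%Z)) (Rabs (u m))). pose proof (Rabs_pos_lt _ Hm).
    unfold vec_norm, sol_vec; simpl; lra. }
  destruct (Hdecay (vec_norm (sol_vec u m) / 4) ltac:(lra)) as [N HN].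
  assert (Hfar : forall j, (Z.of_nat N + 1 <= Z.abs j)%Z ->
            vec_norm (sol_vec u j) < vec_norm (sol_vec u m) / 4)
    by (intros j Hj; apply vec_norm_lub_lt; simpl; apply HN; lia).
  destruct (Hrep (N + Z.to_nat (Z.abs m) + 2)%nat) as [q [d [Hq [Hd [Hper Hsmall]]]]].
  pose proof (gordon_solution_estimate V E u Hrec B q d m HV Hd Hper Hsmall).
  assert (Rmax (vec_norm (sol_vec u (m - Z.of_nat q)))
            (Rmax (vec_norm (sol_vec u (m + Z.of_nat q)))
                  (vec_norm (sol_vec u (m + Z.of_nat q + Z.of_nat q))))
          < vec_norm (sol_vec u m) / 4)
    by (apply Rmax_lub_lt; [|apply Rmax_lub_lt]; apply Hfar; lia).
  lra.
Qed.

Definition rational (x : R) : Prop := exists p q : Z, q <> 0%Z /\ x = IZR p / IZR q.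

Lemma rational_IZR z : rational (IZR z).
Proof. exists z, 1%Z; split; [lia | unfold Rdiv; rewrite Rinv_1; ring]. Qed.

Lemma rational_plus x y : rational x -> rational y -> rational (x + y).
Proof.
  intros [p [q [Hq ->]]] [p' [q' [Hq' ->]]].
  exists (p * q' + p' * q)%Z, (q * q')%Z. split; [lia|].
  apply not_0_IZR in Hq; apply not_0_IZR in Hq'.
  rewrite plus_IZR, !mult_IZR. field; split; assumption.
Qed.

Lemma rational_inv x : rational x -> rational (/ x).
Proof.
  intros [p [q [Hq ->]]]. destruct (Z.eq_dec p 0) as [->|Hp].
  - exists 0%Z, 1%Z. split; [lia|]. unfold Rdiv. rewrite !Rmult_0_l, Rinv_0. ring.
  - exists q, p. split; [assumption|].
    apply not_0_IZR in Hq; apply not_0_IZR in Hp. field; split; assumption.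
Qed.

Lemma irrational_not_rational w : irrational w -> ~ rational w.
Proof. intros Hw [p [q [Hq Hpq]]]. exact (Hw p q Hq Hpq). Qed.

Lemma cf_rem_rational w n : rational (cf_rem w n) -> rational w.
Proof.
  induction n as [|n IH]; simpl; intros H.
  - rewrite (Rplus_Int_part_frac_part w). apply rational_plus; [apply rational_IZR | exact H].
  - apply IH. rewrite <- (Rinv_inv (cf_rem w n)). apply rational_inv.
    rewrite (Rplus_Int_part_frac_part (/ cf_rem w n)).
    apply rational_plus; [apply rational_IZR | exact H].
Qed.

Lemma cf_rem_range w n : 0 <= cf_rem w n < 1.
Proof. destruct n; simpl; [destruct (base_fp w) | destruct (base_fp (/ cf_rem w n))]; lra. Qed.

Lemma cf_rem_pos w n : irrational w -> 0 < cf_rem w n.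
Proof.
  intros Hw. destruct (cf_rem_range w n) as [[H|H] _]; [exact H|].
  exfalso. apply (irrational_not_rational w Hw), (cf_rem_rational w n).
  rewrite <- H. apply (rational_IZR 0).
Qed.

Lemma cf_a_rem w n : cf_a w n + cf_rem w (S n) = / cf_rem w n.
Proof. unfold cf_a; simpl. rewrite <- Rplus_Int_part_frac_part. reflexivity. Qed.

Lemma cf_a_ge1 w n : irrational w -> 1 <= cf_a w n.
Proof.
  intro Hw. pose proof (cf_rem_pos w n Hw) as H. pose proof (cf_rem_range w n).
  assert (1 < / cf_rem w n).
  { apply (Rmult_lt_reg_l (cf_rem w n)); [assumption|]. rewrite Rinv_r; lra. }
  unfold cf_a. destruct (base_Int_part (/ cf_rem w n)).
  assert (0 < IZR (Int_part (/ cf_rem w n))) by lra.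
  apply lt_IZR in H4. apply IZR_le. lia.
Qed.

(* The distance from [q_n w] to the nearest integer, see [cf_error]. *)
Fixpoint cf_dprod (w : R) (n : nat) : R :=
  match n with O => cf_rem w 0 | S m => cf_dprod w m * cf_rem w (S m) end.

Lemma cf_dprod_pos w n : irrational w -> 0 < cf_dprod w n.
Proof.
  intro Hw. induction n as [|n IH].
  - exact (cf_rem_pos w 0 Hw).
  - apply Rmult_lt_0_compat; [exact IH | exact (cf_rem_pos w (S n) Hw)].
Qed.

Lemma cf_dprod_0 w : irrational w -> cf_a w 0 * cf_dprod w 0 + cf_dprod w 1 = 1.
Proof.
  intro Hw. pose proof (cf_rem_pos w 0 Hw). pose proof (cf_a_rem w 0).
  change (cf_dprod w 1) with (cf_dprod w 0 * cf_rem w 1).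
  change (cf_dprod w 0) with (cf_rem w 0).
  replace (cf_rem w 1) with (/ cf_rem w 0 - cf_a w 0) by lra. field; lra.
Qed.

Lemma cf_dprod_SS w n : irrational w ->
  cf_dprod w n = cf_a w (S n) * cf_dprod w (S n) + cf_dprod w (S (S n)).
Proof.
  intro Hw. pose proof (cf_rem_pos w (S n) Hw). pose proof (cf_a_rem w (S n)).
  change (cf_dprod w (S (S n))) with (cf_dprod w n * cf_rem w (S n) * cf_rem w (S (S n))).
  change (cf_dprod w (S n)) with (cf_dprod w n * cf_rem w (S n)).
  replace (cf_rem w (S (S n))) with (/ cf_rem w (S n) - cf_a w (S n)) by lra. field; lra.
Qed.

Fixpoint cf_ppair (w : R) (n : nat) : R * R :=
  match n with
  | O => (IZR (Int_part w), cf_a w 0 * IZR (Int_part w) + 1)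
  | S m => let (p, c) := cf_ppair w m in (c, cf_a w (S m) * c + p)
  end.

Definition cf_p (w : R) (n : nat) : R := fst (cf_ppair w n).

Lemma cf_qSS w n : cf_q w (S (S n)) = cf_a w (S n) * cf_q w (S n) + cf_q w n.
Proof.
  assert (H : forall k, cf_qpair w k = (cf_q w k, cf_q w (S k))).
  { induction k as [|k IH]; [reflexivity|].
    unfold cf_q at 1 2; simpl; rewrite IH; unfold cf_q; simpl; rewrite IH; reflexivity. }
  unfold cf_q at 1; simpl; rewrite H; reflexivity.
Qed.

Lemma cf_pSS w n : cf_p w (S (S n)) = cf_a w (S n) * cf_p w (S n) + cf_p w n.
Proof.
  assert (H : forall k, cf_ppair w k = (cf_p w k, cf_p w (S k))).
  { induction k as [|k IH]; [reflexivity|].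
    unfold cf_p at 1 2; simpl; rewrite IH; unfold cf_p; simpl; rewrite IH; reflexivity. }
  unfold cf_p at 1; simpl; rewrite H; reflexivity.
Qed.

Lemma nat_ind2 (P : nat -> Prop) :
  P 0%nat -> P 1%nat -> (forall n, P n -> P (S n) -> P (S (S n))) -> forall n, P n.
Proof.
  intros H0 H1 HS n. enough (P n /\ P (S n)) by tauto.
  induction n as [|n [IH IH']]; [split; assumption | split; [|apply HS]; assumption].
Qed.

Lemma cf_q_integer w n : exists z, cf_q w n = IZR z.
Proof.
  induction n using nat_ind2.
  - exists 1%Z; reflexivity.
  - exists (Int_part (/ cf_rem w 0)); reflexivity.
  - destruct IHn as [z Hz], IHn0 as [z' Hz'].
    exists (Int_part (/ cf_rem w (S n)) * z' + z)%Z.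
    rewrite cf_qSS, plus_IZR, mult_IZR, Hz, Hz'. reflexivity.
Qed.

Lemma cf_p_integer w n : exists z, cf_p w n = IZR z.
Proof.
  induction n using nat_ind2.
  - exists (Int_part w); reflexivity.
  - exists (Int_part (/ cf_rem w 0) * Int_part w + 1)%Z.
    unfold cf_p, cf_a; simpl. rewrite plus_IZR, mult_IZR. reflexivity.
  - destruct IHn as [z Hz], IHn0 as [z' Hz'].
    exists (Int_part (/ cf_rem w (S n)) * z' + z)%Z.
    rewrite cf_pSS, plus_IZR, mult_IZR, Hz, Hz'. reflexivity.
Qed.

Lemma cf_q_ge w n : irrational w -> 1 <= cf_q w n /\ INR n <= cf_q w n.
Proof.
  intro Hw. induction n using nat_ind2.
  - unfold cf_q; simpl; lra.
  - pose proof (cf_a_ge1 w 0 Hw). unfold cf_q; simpl; lra.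
  - rewrite cf_qSS, !S_INR. pose proof (cf_a_ge1 w (S n) Hw). rewrite S_INR in IHn0.
    assert (0 <= (cf_a w (S n) - 1) * cf_q w (S n)) by (apply Rmult_le_pos; lra). lra.
Qed.

Lemma cf_error w n : irrational w -> cf_q w n * w - cf_p w n = (-1) ^ n * cf_dprod w n.
Proof.
  intro Hw. induction n using nat_ind2.
  - unfold cf_q, cf_p; simpl. pose proof (Rplus_Int_part_frac_part w). lra.
  - unfold cf_q, cf_p; simpl. pose proof (Rplus_Int_part_frac_part w).
    pose proof (cf_dprod_0 w Hw). simpl in *. nra.
  - rewrite cf_qSS, cf_pSS, (cf_dprod_SS w n Hw) in *. simpl pow in *. nra.
Qed.

Lemma cf_det w n : irrational w ->
  cf_q w (S n) * cf_dprod w n + cf_q w n * cf_dprod w (S n) = 1.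
Proof.
  intro Hw. induction n as [|n IH].
  - pose proof (cf_dprod_0 w Hw). unfold cf_q; simpl in *. lra.
  - rewrite cf_qSS. rewrite (cf_dprod_SS w n Hw) in IH. nra.
Qed.

Lemma cf_approximation w n : irrational w ->
  exists (q : nat) (P : Z), INR q = cf_q w n /\ (n <= q)%nat /\
    Rabs (INR q * w - IZR P) <= / cf_q w (S n).
Proof.
  intro Hw. destruct (cf_q_integer w n) as [z Hz], (cf_p_integer w n) as [P HP].
  destruct (cf_q_ge w n Hw) as [Hq1 Hqn]. destruct (cf_q_ge w (S n) Hw) as [HqS _].
  assert (Hz0 : (0 <= z)%Z) by (apply le_IZR; lra).
  assert (Hq : INR (Z.to_nat z) = cf_q w n) by (rewrite INR_IZR_INZ, Z2Nat.id; auto).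
  exists (Z.to_nat z), P. split; [exact Hq|]. split; [apply INR_le; lra|].
  rewrite Hq, <- HP, cf_error, Rabs_mult, pow_1_abs, Rmult_1_l by exact Hw.
  pose proof (cf_dprod_pos w n Hw). pose proof (cf_dprod_pos w (S n) Hw).
  pose proof (cf_det w n Hw).
  rewrite Rabs_pos_eq by lra.
  apply (Rmult_le_reg_l (cf_q w (S n))); [lra|]. rewrite Rinv_r by lra.
  assert (0 <= cf_q w n * cf_dprod w (S n)) by (apply Rmult_le_pos; lra). lra.
Qed.

Lemma liouville_approximation w c : irrational w -> beta_gt w c ->
  forall N : nat, exists (q : nat) (P : Z), (N <= q)%nat /\ (1 <= q)%nat /\
    Rabs (INR q * w - IZR P) <= exp (- (c * INR q)).
Proof.
  intros Hw [c' [Hc' Hb]] N. destruct (Hb N) as [n [Hn Hln]].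
  destruct (cf_approximation w n Hw) as [q [P [Hq [Hnq HP]]]].
  destruct (cf_q_ge w n Hw) as [Hq1 _]. destruct (cf_q_ge w (S n) Hw) as [HqS _].
  exists q, P. split; [lia|]. split; [apply INR_le; simpl; lra|].
  rewrite <- Hq in Hln, Hq1. unfold Rdiv in Hln.
  assert (Hlt : c * INR q < ln (cf_q w (S n))).
  { apply Rlt_le_trans with (c' * INR q); [apply Rmult_lt_compat_r; lra|].
    apply (Rmult_lt_compat_r (INR q)) in Hln; [|lra].
    rewrite Rmult_assoc, Rinv_l, Rmult_1_r in Hln by lra. lra. }
  eapply Rle_trans; [exact HP|]. rewrite exp_Ropp.
  apply Rinv_le_contravar; [apply exp_pos|].
  rewrite <- (exp_ln (cf_q w (S n))) by lra. left; apply exp_increasing; exact Hlt.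
Qed.

Lemma exp_le_mono x y : x <= y -> exp x <= exp y.
Proof. intros [H|H]; [left; apply exp_increasing, H | rewrite H; right; reflexivity]. Qed.

Lemma periodic1_IZR f : periodic1 f -> forall z x, f (x + IZR z) = f x.
Proof.
  intro Hp.
  assert (Hn : forall n x, f (x + INR n) = f x).
  { induction n as [|n IH]; intro x; [rewrite Rplus_0_r; reflexivity|].
    rewrite S_INR, <- Rplus_assoc, Hp. apply IH. }
  intros z x. destruct (Z_le_gt_dec 0 z).
  - rewrite <- (Z2Nat.id z), <- INR_IZR_INZ by assumption. apply Hn.
  - replace z with (- Z.of_nat (Z.to_nat (- z)))%Z by lia.
    rewrite opp_IZR, <- INR_IZR_INZ, <- (Hn (Z.to_nat (- z))). f_equal; ring.
Qed.

Lemma sup_norm_bound g s : is_sup_norm g s -> (forall x, Rabs (g x) <= s) /\ 0 <= s.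
Proof.
  intros [Hub _]. split; [intro x; apply Hub; exists x; reflexivity|].
  pose proof (Hub (Rabs (g 0)) (ex_intro _ 0 eq_refl)). pose proof (Rabs_pos (g 0)). lra.
Qed.

Section Potential.
Variables (f df : R -> R) (K w : R).
Hypothesis Hder : forall x, derivable_pt_lim f x (df x).
Hypothesis Hf : forall x, Rabs (f x) <= 1.
Hypothesis Hdf : forall x, Rabs (df x) <= 1.
Hypothesis HK : 0 <= K.

Lemma exp_scal_le c x : Rabs c <= K -> exp (c * f x) <= exp K.
Proof.
  intro Hc. apply exp_le_mono. eapply Rle_trans; [apply Rle_abs|].
  rewrite Rabs_mult. pose proof (Hf x). pose proof (Rabs_pos c). pose proof (Rabs_pos (f x)). nra.
Qed.

Lemma exp_scal_lipschitz c a b : Rabs c <= K ->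
  Rabs (exp (c * f a) - exp (c * f b)) <= K * exp K * Rabs (a - b).
Proof.
  intro Hc.
  assert (Hd : forall x, derivable_pt_lim (fun x => exp (c * f x)) x (exp (c * f x) * (c * df x))).
  { intro x. apply (derivable_pt_lim_comp (fun x => c * f x) exp).
    - apply (derivable_pt_lim_scal f c), Hder.
    - apply derivable_pt_lim_exp. }
  destruct (MVT_abs _ _ b a (fun x _ => Hd x)) as [x [Hx _]].
  rewrite Hx. apply Rmult_le_compat_r; [apply Rabs_pos|].
  rewrite !Rabs_mult, (Rabs_pos_eq (exp _)) by (left; apply exp_pos).
  pose proof (exp_scal_le c x Hc). pose proof (exp_pos (c * f x)).
  pose proof (Hdf x). pose proof (Rabs_pos c). pose proof (Rabs_pos (df x)).
  rewrite (Rmult_comm K). apply Rmult_le_compat; [lra | nra | lra | nra].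
Qed.

Lemma Vpot_bound x : 0 <= Vpot f K w x <= 2 * exp K.
Proof.
  unfold Vpot. assert (Hm : Rabs (- K) <= K) by (rewrite Rabs_Ropp, Rabs_pos_eq; lra).
  pose proof (exp_scal_le K (x + w) ltac:(rewrite Rabs_pos_eq; lra)).
  pose proof (exp_scal_le (- K) x Hm).
  pose proof (exp_pos (K * f (x + w))). pose proof (exp_pos (- K * f x)). lra.
Qed.

Lemma Vpot_lipschitz a b : Rabs (Vpot f K w a - Vpot f K w b) <= 2 * K * exp K * Rabs (a - b).
Proof.
  unfold Vpot.
  pose proof (exp_scal_lipschitz K (a + w) (b + w) ltac:(rewrite Rabs_pos_eq; lra)).
  pose proof (exp_scal_lipschitz (- K) a b ltac:(rewrite Rabs_Ropp, Rabs_pos_eq; lra)).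
  replace (a + w - (b + w)) with (a - b) in * by ring.
  replace (exp (K * f (a + w)) + exp (- K * f a) - (exp (K * f (b + w)) + exp (- K * f b)))
    with ((exp (K * f (a + w)) - exp (K * f (b + w))) + (exp (- K * f a) - exp (- K * f b)))
    by ring.
  eapply Rle_trans; [apply Rabs_triang | lra].
Qed.

(* Shifting by [q] sites moves the phase by [q w], which is [q w - P] modulo 1. *)
Lemma Vpot_shift_close x (q : nat) (P : Z) : periodic1 f ->
  Rabs (Vpot f K w (x + INR q * w) - Vpot f K w x) <= 2 * K * exp K * Rabs (INR q * w - IZR P).
Proof.
  intro Hp.
  assert (Hper : Vpot f K w (x + INR q * w) = Vpot f K w (x + (INR q * w - IZR P))).
  { unfold Vpot.
    replace (x + INR q * w) with (x + (INR q * w - IZR P) + IZR P) by ring.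
    replace (x + (INR q * w - IZR P) + IZR P + w)
      with (x + (INR q * w - IZR P) + w + IZR P) by ring.
    rewrite !(periodic1_IZR f Hp). reflexivity. }
  rewrite Hper. eapply Rle_trans; [apply Vpot_lipschitz|]. right. f_equal. f_equal. ring.
Qed.

End Potential.

Lemma l2Z_vanishes u : l2Z u -> vanishes_at_infinity u.
Proof.
  intros [M HM] eta Heta.
  set (g := fun k : nat => u (Z.of_nat k) ^ 2 + u (- Z.of_nat (S k))%Z ^ 2).
  assert (Hg : forall k, 0 <= g k) by (intro; unfold g; nra).
  set (Sg := sum_f_R0 g).
  assert (Hgrow : Un_growing Sg) by (intro n; unfold Sg; simpl; pose proof (Hg (S n)); lra).
  assert (Hub : has_ub Sg) by (exists M; intros x [n ->]; apply HM).
  destruct (growing_cv Sg Hgrow Hub) as [l Hl].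
  destruct (CV_Cauchy Sg (exist _ l Hl) (eta ^ 2) ltac:(nra)) as [N HN].
  assert (Hgk : forall k, (N < k)%nat -> g k < eta ^ 2).
  { intros [|k] Hk; [lia|].
    specialize (HN (S k) k ltac:(lia) ltac:(lia)). unfold R_dist, Sg in HN. simpl in HN.
    replace (sum_f_R0 g k + g (S k) - sum_f_R0 g k) with (g (S k)) in HN by ring.
    rewrite Rabs_pos_eq in HN by apply Hg. exact HN. }
  assert (Hsq : forall j, u j ^ 2 < eta ^ 2 -> Rabs (u j) < eta).
  { intros j Hj. rewrite <- !Rsqr_pow2 in Hj. apply Rsqr_lt_abs_0 in Hj.
    rewrite (Rabs_pos_eq eta) in Hj by lra. exact Hj. }
  exists (N + 2)%nat. intros j Hj. apply Hsq.
  destruct (Z_le_gt_dec 0 j).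
  - specialize (Hgk (Z.to_nat j) ltac:(lia)). unfold g in Hgk.
    rewrite Z2Nat.id in Hgk by assumption.
    pose proof (pow2_ge_0 (u (- Z.of_nat (S (Z.to_nat j)))%Z)). lra.
  - specialize (Hgk (Z.to_nat (- j - 1)) ltac:(lia)). unfold g in Hgk.
    replace (- Z.of_nat (S (Z.to_nat (- j - 1))))%Z with j in Hgk by lia.
    pose proof (pow2_ge_0 (u (Z.of_nat (Z.to_nat (- j - 1))))). lra.
Qed.

Lemma exp_pow x n : exp x ^ n = exp (x * INR n).
Proof.
  induction n as [|n IH]; [simpl; rewrite Rmult_0_r, exp_0; reflexivity|].
  rewrite <- tech_pow_Rmult, IH, <- exp_plus, S_INR. f_equal; ring.
Qed.

Lemma eight_exp_le K : 1 <= K -> 8 * exp K <= exp (4 * K).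
Proof.
  intro HK.
  assert (He1 : 2 < exp 1) by (pose proof (exp_ineq1 1 ltac:(lra)); lra).
  assert (He3 : 8 < exp 3).
  { replace 3 with (1 + (1 + 1)) by ring. rewrite !exp_plus. pose proof (exp_pos 1). nra. }
  apply Rle_trans with (exp 3 * exp K); [pose proof (exp_pos K); nra|].
  rewrite <- exp_plus. apply exp_le_mono. lra.
Qed.

(* The Liouville condition [beta > 40 K] beats the growth [(8 e^K)^(2q) <= e^(8 K q)] of the
   transfer matrices, with room to spare. *)
Lemma liouville_smallness K (q : nat) : 1 <= K -> 1 <= INR q ->
  16 * INR q * (8 * exp K) ^ (2 * q) * (2 * K * exp K * exp (- (40 * K * INR q))) <= 1.
Proof.
  intros HK Hq. set (x := K * INR q).
  assert (Hx : 1 <= x) by (unfold x; nra).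
  assert (Hgrowth : (8 * exp K) ^ (2 * q) <= exp (8 * x)).
  { apply Rle_trans with (exp (4 * K) ^ (2 * q)).
    - apply pow_incr. pose proof (exp_pos K). split; [lra | apply eight_exp_le, HK].
    - rewrite exp_pow, mult_INR. unfold x. right. f_equal. simpl. ring. }
  assert (HeK : exp K <= exp x) by (apply exp_le_mono; unfold x; nra).
  assert (H31 : 32 * x <= exp (31 * x)).
  { replace (31 * x) with (x + 30 * x) by ring. rewrite exp_plus.
    pose proof (exp_ineq1_le x). pose proof (exp_ineq1_le (30 * x)). nra. }
  assert (Hprod : exp (8 * x) * exp x * exp (- (40 * K * INR q)) * exp (31 * x) = 1).
  { rewrite <- !exp_plus, <- exp_0. f_equal. unfold x. ring. }
  pose proof (exp_pos K); pose proof (exp_pos x); pose proof (exp_pos (8 * x)).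
  pose proof (exp_pos (- (40 * K * INR q))); pose proof (exp_pos (31 * x)).
  pose proof (pow_le (8 * exp K) (2 * q) ltac:(lra)).
  apply Rle_trans with (32 * x * (exp (8 * x) * exp x * exp (- (40 * K * INR q)))).
  - replace (16 * INR q * (8 * exp K) ^ (2 * q) * (2 * K * exp K * exp (- (40 * K * INR q))))
      with (32 * x * ((8 * exp K) ^ (2 * q) * exp K * exp (- (40 * K * INR q))))
      by (unfold x; ring).
    apply Rmult_le_compat_l; [lra|]. apply Rmult_le_compat_r; [lra|].
    apply Rmult_le_compat; lra.
  - set (e := exp (8 * x) * exp x * exp (- (40 * K * INR q))) in *. nra.
Qed.

Theorem mainTheorem5 :
  forall (f df : R -> R) (normf normdf : R),
    periodic1 f ->
    real_analytic f ->
    (exists x y, f x <> f y) ->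
    (forall pr : Riemann_integrable f 0 1, RiemannInt pr = 0) ->
    (forall x, derivable_pt_lim f x (df x)) ->
    is_sup_norm f normf ->
    is_sup_norm df normdf ->
    normf + normdf = 1 ->
  forall (K w : R),
    1 <= K ->
    irrational w ->
    beta_gt w (40 * K) ->
  forall (th E : R),
    0 <= E <= 4 * exp (K * normf) ->
    ~ is_eigenvalue f K th w E.
Proof.
  intros f df normf normdf Hper _ _ _ Hder Hsf Hsdf Hsum K w HK Hw Hbeta th E HE
    [u [Hl2 [[m Hm] Heq]]].
  destruct (sup_norm_bound _ _ Hsf) as [Hf0 Hnf], (sup_norm_bound _ _ Hsdf) as [Hdf0 Hndf].
  assert (Hf : forall x, Rabs (f x) <= 1) by (intro x; pose proof (Hf0 x); lra).
  assert (Hdf : forall x, Rabs (df x) <= 1) by (intro x; pose proof (Hdf0 x); lra).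
  assert (HEK : E <= 4 * exp K)
    by (pose proof (exp_le_mono (K * normf) K ltac:(nra)); lra).
  set (V := fun j : Z => Vpot f K w (th + IZR j * w)).
  apply Hm, (gordon_criterion V E (8 * exp K) u).
  - intro j. pose proof (Vpot_bound f K w Hf ltac:(lra) (th + IZR j * w)).
    pose proof (exp_ineq1_le K). unfold V.
    unfold Rabs; destruct (Rcase_abs _); lra.
  - intro N. destruct (liouville_approximation w (40 * K) Hw Hbeta N) as [q [P [HN [Hq HP]]]].
    exists q, (2 * K * exp K * exp (- (40 * K * INR q))). split; [exact HN|].
    split; [left; repeat apply Rmult_lt_0_compat; solve [apply exp_pos | lra]|].
    split.
    + intro k. unfold V. rewrite plus_IZR, <- INR_IZR_INZ.
      replace (th + (IZR k + INR q) * w) with (th + IZR k * w + INR q * w) by ring.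
      eapply Rle_trans; [apply (Vpot_shift_close f df K w Hder Hf Hdf ltac:(lra) _ q P Hper)|].
      apply Rmult_le_compat_l; [pose proof (exp_pos K); nra | exact HP].
    + apply liouville_smallness; [exact HK | apply (le_INR 1); exact Hq].
  - intro j. specialize (Heq j). unfold V. lra.
  - apply l2Z_vanishes, Hl2.
Qed.
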